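(* Let $\mathbf{x}$ be an input, $\bar{\mathcal{V}}$ a finite token set, $p_\theta(\cdot\mid\mathbf{x})$ a score on hypotheses, and $k\ge 1$. Run one iteration $t$ of Lookbehind Heuristic Beam Search on a set $Y_{t-1}$ of $k$ hypotheses, producing $\mathbf{y}_t^1,\dots,\mathbf{y}_t^k$. Then for every $i\in\{1,\dots,k\}$, writing $\mathbf{y}_t^i=\mathbf{y}'\circ y$ with $\mathbf{y}'\in Y_{t-1}$ and $y\in\bar{\mathcal{V}}$: (1) the parent $\mathbf{y}'$ is among the top-$i$ scoring hypotheses of $Y_{t-1}$, i.e. $\mathbf{y}'=\mathbf{y}_{t-1}^j$ for some $j\le i$, where $\mathbf{y}_{t-1}^1,\dots,\mathbf{y}_{t-1}^k$ is $Y_{t-1}$ sorted in descending order of $p_\theta(\cdot\mid\mathbf{x})$; (2) $\mathbf{y}_t^i$ has one of the top-$i$ highest scores among all children of the top-$i$ parents, i.e. among $C_i=\{\mathbf{y}_{t-1}^j\circ y : j\le i,\ y\in\bar{\mathcal{V}}\}$ at most $i-1$ elements have score $\log p_\theta(\cdot\mid\mathbf{x})$ strictly greater than that of $\mathbf{y}_t^i$.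
   Context: One iteration of Lookbehind Heuristic Beam Search (LHBS), given $Y_{t-1}$: sort $Y_{t-1}$ as $\mathbf{y}_{t-1}^1,\dots,\mathbf{y}_{t-1}^k$ in descending order of $p_\theta(\mathbf{y}_{t-1}^i\mid\mathbf{x})$; set $\mathcal{B}'_{t,0}=\emptyset$; for $i=1,\dots,k$: set $\mathcal{B}_{t,i}=\mathcal{B}'_{t,i-1}\cup\{\mathbf{y}_{t-1}^i\circ y: y\in\bar{\mathcal{V}}\}$, $\mathbf{y}_t^i=\arg\max_{\mathbf{y}\in\mathcal{B}_{t,i}}\log p_\theta(\mathbf{y}\mid\mathbf{x})$, and $\mathcal{B}'_{t,i}=\mathcal{B}_{t,i}\setminus\{\mathbf{y}_t^i\}$; return $Y_t=\{\mathbf{y}_t^1,\dots,\mathbf{y}_t^k\}$. Here $\circ$ denotes concatenation. *)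

From HB Require Import structures.
From mathcomp Require Import all_boot all_order all_algebra.
From mathcomp Require Import all_classical all_reals all_analysis.
Set Implicit Arguments. Unset Strict Implicit. Unset Printing Implicit Defensive.
Import Order.TTheory GRing.Theory Num.Theory.
Local Open Scope ring_scope.

(* Hypotheses are token sequences [seq V]; concatenation y' o y of a
   hypothesis with a token is [rcons y' y]. *)

Definition children (V : finType) (y' : seq V) : seq (seq V) :=
  [seq rcons y' v | v <- enum V].

(* LHBS bookkeeping, 0-indexed.  [ys] is Y_{t-1} sorted (ys`_0 = y^1_{t-1}),
   [zs] the outputs (zs`_n = y^{n+1}_t).
   Bp ys zs n = B'_{t,n};  B ys zs n = B_{t,n+1}. *)
Fixpoint LHBS_Bp (V : finType) (ys zs : seq (seq V)) (n : nat) : seq (seq V) :=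
  match n with
  | 0 => [::]
  | m.+1 => [seq w <- LHBS_Bp ys zs m ++ children (nth [::] ys m)
             | w != nth [::] zs m]
  end.

Definition LHBS_B (V : finType) (ys zs : seq (seq V)) (n : nat) : seq (seq V) :=
  LHBS_Bp ys zs n ++ children (nth [::] ys n).

(* [zs] is a possible output of one LHBS iteration run on the sorted list
   [ys], with score p (i.e. p_theta(. | x)): at step n, zs`_n is an argmax of
   ln p over B_{t,n+1} (any tie-breaking). *)
Definition LHBS_iteration (R : realType) (V : finType) (p : seq V -> R)
    (ys zs : seq (seq V)) : Prop :=
  size zs = size ys /\
  forall n, (n < size ys)%N ->
    nth [::] zs n \in LHBS_B ys zs n /\
    forall w, w \in LHBS_B ys zs n -> ln (p w) <= ln (p (nth [::] zs n)).

(* C_{i+1} (0-indexed i): children of the top-(i+1) parents. *)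
Definition top_children (V : finType) (ys : seq (seq V)) (i : nat) : seq (seq V) :=
  [seq rcons (nth [::] ys j) v | j <- iota 0 i.+1, v <- enum V].

(* A candidate leaves the LHBS pool only by being selected, and the pool
   B_{t,i} only ever receives children of the first i parents.  Hence the
   parent of y_t^i is among the top-i parents, and every w in C_i that is not
   one of y_t^1, ..., y_t^(i-1) is still in B_{t,i} when y_t^i is chosen as an
   argmax there; so the children scoring strictly more than y_t^i are among
   those i-1 earlier outputs. *)
From HB Require Import structures.
From mathcomp Require Import all_boot all_order all_algebra.
From mathcomp Require Import all_classical all_reals all_analysis.
Import Order.TTheory GRing.Theory Num.Theory.
Local Open Scope ring_scope.

Section Pool.
Variable V : finType.
Variables ys zs : seq (seq V).

Lemma childrenP (y w : seq V) :
  reflect (exists v, w = rcons y v) (w \in children y).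
Proof.
apply: (iffP mapP) => [[v _ ->]|[v ->]]; first by exists v.
by exists v; rewrite ?mem_enum.
Qed.

Lemma top_childrenP i w :
  reflect (exists2 j, (j <= i)%N & exists v, w = rcons (nth [::] ys j) v)
          (w \in top_children ys i).
Proof.
apply: (iffP allpairsP) => [[[j v] [+ _ ->]]|[j le_ji [v ->]]].
  by rewrite mem_iota add0n ltnS => /andP[_ le_ji]; exists j => //; exists v.
by exists (j, v); rewrite mem_iota add0n mem_enum; split.
Qed.

Lemma LHBS_Bp_parent n w : w \in LHBS_Bp ys zs n ->
  exists2 j, (j < n)%N & exists v, w = rcons (nth [::] ys j) v.
Proof.
elim: n w => [|n IHn] w //=; rewrite mem_filter mem_cat => /andP[_].
case/orP => [/IHn [j lt_jn wj]|/childrenP wn]; last by exists n.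
by exists j => //; apply: ltnW.
Qed.

Lemma LHBS_B_parent n w : w \in LHBS_B ys zs n ->
  exists2 j, (j <= n)%N & exists v, w = rcons (nth [::] ys j) v.
Proof.
rewrite mem_cat => /orP[/LHBS_Bp_parent [j lt_jn wj]|/childrenP wn].
  by exists j => //; apply: ltnW.
by exists n.
Qed.

Lemma LHBS_B_persist n m w : (n <= m)%N -> w \in LHBS_B ys zs n ->
  (forall l, (n <= l < m)%N -> w != nth [::] zs l) -> w \in LHBS_B ys zs m.
Proof.
move=> /subnKC <-; move: (m - n)%N => d wB.
elim: d => [|d IHd] not_chosen; first by rewrite addn0.
rewrite addnS /LHBS_B mem_cat /= mem_filter not_chosen ?IHd //=.
  by move=> l /andP[le_nl lt_l]; rewrite not_chosen // le_nl addnS ltnS ltnW.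
by rewrite leq_addr addnS leqnn.
Qed.

Lemma top_children_LHBS_B i w : (i <= size zs)%N ->
  w \in top_children ys i -> w \notin take i zs -> w \in LHBS_B ys zs i.
Proof.
move=> le_i_zs /top_childrenP [j le_ji [v ->]] not_earlier.
apply: LHBS_B_persist le_ji _ _.
  by rewrite mem_cat; apply/orP; right; apply/childrenP; exists v.
move=> l /andP[_ lt_li]; apply: contraNneq not_earlier => ->.
by rewrite -(nth_take _ lt_li) mem_nth // size_take_min leq_min lt_li (leq_trans lt_li).
Qed.

End Pool.

Section Selection.
Variables (R : realType) (V : finType) (p : seq V -> R).
Variables ys zs : seq (seq V).
Hypothesis run : LHBS_iteration p ys zs.

Lemma LHBS_better_child_earlier i w : (i < size ys)%N ->
  w \in top_children ys i -> ln (p (nth [::] zs i)) < ln (p w) ->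
  w \in take i zs.
Proof.
case: run => size_zs selected lt_i w_child better.
apply: contraLR better => not_earlier; rewrite -leNgt.
apply: (selected i lt_i).2; apply: top_children_LHBS_B => //.
by rewrite size_zs ltnW.
Qed.

Lemma LHBS_rank_bound i : (i < size ys)%N ->
  (size (undup [seq w <- top_children ys i
               | (ln (p (nth [::] zs i)) < ln (p w))%R]) <= i)%N.
Proof.
move=> lt_i; apply: (@leq_trans (size (take i zs))).
  apply: uniq_leq_size (undup_uniq _) _ => w.
  by rewrite mem_undup mem_filter => /andP[better w_child]; apply: LHBS_better_child_earlier.
by rewrite size_take_min geq_minl.
Qed.

End Selection.

Theorem proposition2 (R : realType) (X : Type) (x : X) (V : finType)
    (p : X -> seq V -> R) (k : nat) (ys zs : seq (seq V)) :
  (forall w, 0 < p x w) ->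
  (1 <= k)%N ->
  size ys = k ->
  uniq ys ->
  sorted (fun a b => p x b <= p x a) ys ->
  LHBS_iteration (p x) ys zs ->
  forall i, (i < k)%N ->
    (exists y' v, y' \in ys /\ nth [::] zs i = rcons y' v) /\
    (forall y' v, y' \in ys -> nth [::] zs i = rcons y' v ->
       exists2 j, (j <= i)%N & y' = nth [::] ys j) /\
    (size (undup [seq w <- top_children ys i
                 | (ln (p x (nth [::] zs i)) < ln (p x w))%R]) <= i)%N.
Proof.
move=> _ _ <- _ _ run i lt_i.
case/LHBS_B_parent: (run.2 i lt_i).1 => j le_ji [v zi].
split; first by exists (nth [::] ys j), v; rewrite mem_nth // (leq_ltn_trans le_ji).
split; last exact: LHBS_rank_bound.
by move=> y' v' _; rewrite zi => /rcons_inj [<- _]; exists j.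
Qed.
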